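(* Let $n\ge 2$ and let $T_n^{op}$ be the monoid of all maps $f\colon[n]\to[n]$ with product $(fg)(i)=f(g(i))$ (the opposite of the full transformation monoid $T_n$). Let $X$ be a faithful right $T_n^{op}$-set (action by total maps). Then $X$ contains a $T_n^{op}$-invariant subset isomorphic, as a right $T_n^{op}$-set, to the power set $2^{[n]}$ with action $A\cdot f=f^{-1}(A)$. Consequently, the minimal degree of a faithful action of $T_n^{op}$ by total transformations on the right is $2^n$.
   Context: $[n]=\{1,\dots,n\}$. A right $M$-set for a monoid $M$ is a set $X$ with a map $X\times M\to X$ satisfying $(xf)g=x(fg)$; it is faithful if distinct elements of $M$ act as distinct maps. The minimal degree is the least cardinality of a faithful right $T_n^{op}$-set. *)

From mathcomp Require Import all_boot.
Set Implicit Arguments. Unset Strict Implicit. Unset Printing Implicit Defensive.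

Definition Tn (n : nat) := {ffun 'I_n -> 'I_n}.

Definition Tmul (n : nat) (f g : Tn n) : Tn n := [ffun i => f (g i)].

Definition is_right_act (n : nat) (X : Type) (act : X -> Tn n -> X) : Prop :=
  forall (x : X) (f g : Tn n), act (act x f) g = act x (Tmul f g).

Definition faithful_act (n : nat) (X : Type) (act : X -> Tn n -> X) : Prop :=
  forall f g : Tn n, (forall x : X, act x f = act x g) -> f = g.

Definition pow_act (n : nat) (A : {set 'I_n}) (f : Tn n) : {set 'I_n} :=
  f @^-1: A.

Definition faithful_degree (n d : nat) : Prop :=
  exists (X : finType) (act : X -> Tn n -> X),
    [/\ #|X| = d, is_right_act act & faithful_act act].

From Stdlib Require Import Classical.
From mathcomp Require Import all_boot.

Set Implicit Arguments.
Unset Strict Implicit.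
Unset Printing Implicit Defensive.

(* If a point z separates the constant maps with values a and b, then
   A |-> z . chi_A, where chi_A sends A to b and its complement to a, is an
   embedding of 2^[n]: right-multiplying chi_A by f gives chi_(f^-1 A), and by
   the constant map i gives the constant b or a according as i lies in A.  In a
   faithful action two distinct constants are separated by some point, which
   needs n >= 2; comparing cardinalities then gives the minimal degree 2^n. *)

Lemma card_set_ord (n : nat) : #|{set 'I_n}| = 2 ^ n.
Proof. by rewrite -cardsT -powersetT card_powerset cardsT card_ord. Qed.

Lemma pow_act_is_right_act (n : nat) : is_right_act (@pow_act n).
Proof. by move=> A f g; apply/setP => i; rewrite !inE ffunE. Qed.

Lemma pow_act_faithful (n : nat) : faithful_act (@pow_act n).
Proof.
move=> f g fg; apply/ffunP => i.
by have /setP/(_ i) := fg [set f i]; rewrite !inE eqxx => /esym/eqP.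
Qed.

Lemma faithful_act_separates (n : nat) (X : Type) (act : X -> Tn n -> X)
    (f g : Tn n) :
  faithful_act act -> f <> g -> exists x, act x f <> act x g.
Proof.
move=> faithful_act_X fg; apply: NNPP => no_sep; apply/fg/faithful_act_X => x.
by apply: NNPP => fxg; apply: no_sep; exists x.
Qed.

Section Embedding.

Variables (n : nat) (X : Type) (act : X -> Tn n -> X).
Hypothesis act_right : is_right_act act.

Definition indicator (a b : 'I_n) (A : {set 'I_n}) : Tn n :=
  [ffun i => if i \in A then b else a].

Lemma Tmul_indicator (a b : 'I_n) (A : {set 'I_n}) (f : Tn n) :
  Tmul (indicator a b A) f = indicator a b (pow_act A f).
Proof. by apply/ffunP => i; rewrite !ffunE inE. Qed.

Lemma Tmul_indicator_const (a b i : 'I_n) (A : {set 'I_n}) :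
  Tmul (indicator a b A) [ffun=> i] = [ffun=> if i \in A then b else a].
Proof. by apply/ffunP => j; rewrite !ffunE. Qed.

Variables (z : X) (a b : 'I_n).
Hypothesis z_separates : act z [ffun=> a] <> act z [ffun=> b].

Definition indicator_orbit (A : {set 'I_n}) : X := act z (indicator a b A).

Lemma indicator_orbit_inj : injective indicator_orbit.
Proof.
have orbit_const A i :
    act (indicator_orbit A) [ffun=> i] = act z [ffun=> if i \in A then b else a].
  by rewrite act_right Tmul_indicator_const.
move=> A B AB; apply/setP => i.
have := orbit_const A i; rewrite AB orbit_const.
by case: (i \in A); case: (i \in B) => // ab; case: z_separates; rewrite ab.
Qed.

Lemma indicator_orbit_equivariant (A : {set 'I_n}) (f : Tn n) :
  indicator_orbit (pow_act A f) = act (indicator_orbit A) f.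
Proof. by rewrite /indicator_orbit act_right Tmul_indicator. Qed.

End Embedding.

Lemma pow_act_embeds (n : nat) (X : Type) (act : X -> Tn n -> X) :
  1 < n -> is_right_act act -> faithful_act act ->
  exists phi : {set 'I_n} -> X,
    injective phi /\
    forall (A : {set 'I_n}) (f : Tn n), phi (pow_act A f) = act (phi A) f.
Proof.
case: n act => [|[|n]] // act _ act_right faithful_act_X.
have const_neq : [ffun=> ord0] <> [ffun=> ord_max] :> Tn n.+2.
  by move/ffunP/(_ ord0); rewrite !ffunE.
have [z z_separates] := faithful_act_separates faithful_act_X const_neq.
exists (indicator_orbit act z ord0 ord_max); split.
- exact: indicator_orbit_inj.
- exact: indicator_orbit_equivariant.
Qed.

Theorem theorem3p2 (n : nat) (hn : 2 <= n) :
  (forall (X : Type) (act : X -> Tn n -> X),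
      is_right_act act -> faithful_act act ->
      exists phi : {set 'I_n} -> X,
        injective phi /\
        forall (A : {set 'I_n}) (f : Tn n), phi (pow_act A f) = act (phi A) f)
  /\ (faithful_degree n (2 ^ n) /\ forall d, faithful_degree n d -> 2 ^ n <= d).
Proof.
split; first by move=> X act; exact: pow_act_embeds.
split.
  exists {set 'I_n}, (@pow_act n); split.
  - exact: card_set_ord.
  - exact: pow_act_is_right_act.
  - exact: pow_act_faithful.
move=> d [X [act [<- act_right faithful_act_X]]].
have [phi [phi_inj _]] := pow_act_embeds hn act_right faithful_act_X.
by rewrite -card_set_ord; exact: leq_card phi_inj.
Qed.
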